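(* The minimal word (with respect to alphabetical order) of any equivalence class of words under $\sim$ is reduced.
   Context: $\mathcal{A}$ is the free associative $\mathbb{C}$-algebra on noncommuting generators $L,R$; words are finite products of these letters and a subword is a contiguous block of letters. A word is balanced if it contains equally many $L$'s and $R$'s. $\mathcal{J}$ is the two-sided ideal generated by $\{FG-GF : F,G \text{ nonempty balanced words}\}$, and $X\sim Y$ means $X-Y\in\mathcal{J}$; each equivalence class is finite. Alphabetical order is the lexicographic order with $L$ before $R$, a proper prefix preceding its extensions. A word is prime if it is nonempty, balanced, and not a product of two nonempty balanced words. For balanced $W=a_1\cdots a_n$, $e_k(W)=\sum_{i=1}^k\overline{a_i}$ with $\overline{R}=1$, $\overline{L}=-1$. A prime $P$ of length $n$ is an upper prime if $e_k(P)>0$ for $1\le k\le n-1$, and a lower prime if $e_k(P)<0$ for $1\le k\le n-1$. A word is reduced if it contains no subword $UD$ with $U$ an upper prime and $D$ a lower prime. *)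

From HB Require Import structures.
From mathcomp Require Import all_boot all_order all_algebra.
From mathcomp Require Import complex.
From mathcomp Require Import Rstruct.
Set Implicit Arguments. Unset Strict Implicit. Unset Printing Implicit Defensive.
Import Order.TTheory GRing.Theory Num.Theory.

Definition CC : Type := (complex Rdefinitions.R).
HB.instance Definition _ := GRing.Field.on CC.

Inductive letter := Lt | Rt.
Definition letter_eqb (a b : letter) : bool :=
  match a, b with Lt, Lt | Rt, Rt => true | _, _ => false end.
Lemma letter_eqP : Equality.axiom letter_eqb.
Proof. by case; case; constructor. Qed.
HB.instance Definition _ := hasDecEq.Build letter letter_eqP.

Definition word := seq letter.

Definition balanced (w : word) : bool := count_mem Lt w == count_mem Rt w.

Definition prime_word (w : word) : Prop :=
  w != [::] /\ balanced w /\
  ~ (exists u v : word, [/\ u != [::], v != [::], balanced u, balanced v & w = u ++ v]).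

Definition lval (a : letter) : int := if a is Rt then 1%R else (-1)%R.
Definition e_ (k : nat) (w : word) : int := (\sum_(a <- take k w) lval a)%R.

Definition upper_prime (w : word) : Prop :=
  prime_word w /\ forall k, (1 <= k <= (size w).-1)%N -> (0 < e_ k w)%R.
Definition lower_prime (w : word) : Prop :=
  prime_word w /\ forall k, (1 <= k <= (size w).-1)%N -> (e_ k w < 0)%R.

Definition reduced (w : word) : Prop :=
  ~ (exists x u d y : word, [/\ upper_prime u, lower_prime d & w = x ++ u ++ d ++ y]).

Fixpoint alph_le (u v : word) : bool :=
  match u, v with
  | [::], _ => true
  | _ :: _, [::] => false
  | a :: u', b :: v' =>
      if a == b then alph_le u' v' else (a == Lt) && (b == Rt)
  end.

(* X ~ Y iff X - Y lies in the two-sided ideal J of the free algebra C<L,R>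
   generated by FG - GF (F, G nonempty balanced).  Elements of the free algebra
   are finitely supported coefficient functions on words; J is the C-span of the
   elements U (FG - GF) V with U, V words.  So X ~ Y iff there is a finite list of
   terms (c, (U, F, G, V)) such that, coefficientwise on every word w,
   [X = w] - [Y = w] = sum c * ([U F G V = w] - [U G F V = w]). *)
Definition gen_ok (t : CC * (word * word * word * word)) : bool :=
  let: (_, (_, F, G, _)) := t in
  [&& F != [::], G != [::], balanced F & balanced G].

Definition coef_term (w : word) (t : CC * (word * word * word * word)) : CC :=
  let: (c, (U, F, G, V)) := t in
  (c * (((U ++ F ++ G ++ V) == w)%:R - ((U ++ G ++ F ++ V) == w)%:R))%R.

Definition equiv_words (X Y : word) : Prop :=
  exists s : seq (CC * (word * word * word * word)),
    all gen_ok s /\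
    forall w : word, (((X == w)%:R - (Y == w)%:R : CC) = \sum_(t <- s) coef_term w t)%R.

(* Swapping two adjacent nonempty balanced factors stays in the same class.
   An upper prime begins with R and a lower prime with L, so replacing a
   factor U D by D U makes the word strictly smaller alphabetically; hence a
   minimal word contains no such factor. *)
From mathcomp Require Import all_boot all_algebra.
Import GRing.Theory.

Set Implicit Arguments.
Unset Strict Implicit.

Lemma alph_le_catl (x u v : word) : alph_le (x ++ u) (x ++ v) = alph_le u v.
Proof. by elim: x => //= a x IHx; rewrite eqxx. Qed.

Lemma equiv_words_swap (x F G y : word) :
  F != [::] -> G != [::] -> balanced F -> balanced G ->
  equiv_words (x ++ F ++ G ++ y) (x ++ G ++ F ++ y).
Proof.
move=> nzF nzG balF balG; exists [:: (1%R, (x, F, G, y))]; split.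
  by rewrite /= nzF nzG balF balG.
by move=> w; rewrite big_seq1 /= mul1r.
Qed.

Lemma size_balanced (w : word) : balanced w -> size w = (count_mem Lt w).*2.
Proof.
have size_count : size w = (count_mem Lt w + count_mem Rt w)%N.
  by elim: w => //= -[] w ->; rewrite /= ?addnS.
by rewrite /balanced size_count -addnn => /eqP <-.
Qed.

Lemma e_1_cons (a : letter) (w : word) : e_ 1 (a :: w) = lval a.
Proof. by rewrite /e_ /= take0 big_seq1. Qed.

Lemma prime_word_cons (w : word) :
  prime_word w -> exists a w', w = a :: w' /\ (1 <= size w')%N.
Proof.
case=> nz [bal _]; case: w nz bal => // a w' _ /size_balanced /= sizeE.
by exists a, w'; split=> //; case: w' sizeE => //=; case: a.
Qed.

Lemma upper_prime_cons (u : word) : upper_prime u -> exists u', u = Rt :: u'.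
Proof.
case=> /prime_word_cons [a [u' [-> size_u']]] /(_ 1%N).
by rewrite e_1_cons /= size_u' => /(_ isT); case: a => //; exists u'.
Qed.

Lemma lower_prime_cons (d : word) : lower_prime d -> exists d', d = Lt :: d'.
Proof.
case=> /prime_word_cons [a [d' [-> size_d']]] /(_ 1%N).
by rewrite e_1_cons /= size_d' => /(_ isT); case: a => //; exists d'.
Qed.

Theorem lemma6p2 (W : word) :
  (forall W' : word, equiv_words W W' -> alph_le W W') -> reduced W.
Proof.
move=> W_min [x [u [d [y [up_u low_d W_eq]]]]].
have [[nz_u [bal_u _]] _] := up_u; have [[nz_d [bal_d _]] _] := low_d.
rewrite {}W_eq in W_min.
have := W_min _ (equiv_words_swap x y nz_u nz_d bal_u bal_d).
have [u' ->] := upper_prime_cons up_u; have [d' ->] := lower_prime_cons low_d.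
by rewrite alph_le_catl.
Qed.
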